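(* The set $\mathtt{SUR}$ of surjective cellular automata is dense in $\mathtt{CA}$ equipped with the pointwise topology. Equivalently: for every $c\in\mathtt{CA}$ and every finite set $X\subseteq\Sigma^\mathbb{Z}$ there is a surjective $d\in\mathtt{CA}$ with $d(x)_0=c(x)_0$ for all $x\in X$.
   Context: $\Sigma$ is a finite alphabet with $|\Sigma|\ge 2$, and $\Sigma^\mathbb{Z}$ carries the product (Cantor) topology. The shift $\sigma$ is $\sigma(x)_i=x_{i+1}$. A cellular automaton (CA) is a continuous map $c:\Sigma^\mathbb{Z}\to\Sigma^\mathbb{Z}$ with $c\circ\sigma=\sigma\circ c$; $\mathtt{CA}$ is the set of all CA, $\mathtt{SUR}\subseteq\mathtt{CA}$ the surjective ones. The pointwise topology on $\mathtt{CA}$ is generated by the subbase $U_x(a)=\{c\in\mathtt{CA}\mid c(x)_0=a\}$, $x\in\Sigma^\mathbb{Z}$, $a\in\Sigma$. *)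

From mathcomp Require Import all_boot.
From Stdlib Require Import ZArith.
Set Implicit Arguments. Unset Strict Implicit. Unset Printing Implicit Defensive.

Definition config (S : Type) := Z -> S.

Definition shift (S : Type) (x : config S) : config S := fun i => (x (i + 1))%Z.

(* Continuity of F : S^Z -> S^Z for the product (Cantor) topology with discrete
   finite S: every output coordinate i is determined, near x, by finitely many
   input coordinates (a window [-n,n]). *)
Definition cantor_continuous (S : Type) (F : config S -> config S) : Prop :=
  forall (x : config S) (i : Z), exists n : nat,
    forall y : config S,
      (forall j : Z, (Z.abs j <= Z.of_nat n)%Z -> y j = x j) -> F y i = F x i.

Definition is_CA (S : Type) (F : config S -> config S) : Prop :=
  cantor_continuous F /\ forall x : config S, F (shift x) = shift (F x).

Definition surjective_map (S : Type) (F : config S -> config S) : Prop :=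
  forall y : config S, exists x : config S, F x = y.

From mathcomp Require Import all_boot.
From Stdlib Require Import ZArith List.
From mathcomp Require Import ssralg zmodp zify.
From Stdlib Require Import Classical FunctionalExtensionality.
Set Implicit Arguments. Unset Strict Implicit. Unset Printing Implicit Defensive.
Import GRing.Theory.

(* Given c and a finite sample X of configurations, choose N so that the
   points of X are pairwise distinguished by their coordinates in [-N, N],
   put n := N + 1, and transport to Sigma the group structure of Z/|Sigma|Z.
   The automaton d of radius n with local rule
       d(x)_i = x_(i-n) + phi(x_(i-n+1), ..., x_(i+n-1)) + x_(i+n)
   is bipermutive: its local rule can be solved for either extremal entry.
   Solving for the rightmost (resp. leftmost) entry builds a preimage of any y
   to the right (resp. left) of a constant seed, so d is surjective; and since
   the interior window [-N, N] identifies each x in X, phi can be chosen so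
   that d(x)_0 = c(x)_0 on X. *)

Section Recurrence.
Variables (S : Type) (seed : S) (L : nat) (next : (nat -> S) -> nat -> S).

(* The shift register after k steps: [register k p] is the (k + p)-th term of the
   sequence for p < L; each step shifts left and appends the next term. *)
Fixpoint register (k : nat) : nat -> S :=
  if k is k'.+1 then fun p => if p < L.-1 then register k' p.+1 else next (register k') k'
  else fun=> seed.

Lemma registerE k p : p < L -> register k p = register (k + p) 0.
Proof.
elim: p k => [|p IH] k ltpL; first by rewrite addn0.
have -> : register k p.+1 = register k.+1 p by rewrite /= ifT //; lia.
by rewrite IH ?addSnnS //; lia.
Qed.

Lemma recurrence_solution :
  0 < L -> (forall w w' k, (forall p, p < L -> w p = w' p) -> next w k = next w' k) ->
  exists z : nat -> S, (forall p, p < L -> z p = seed) /\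
    forall k, z (k + L) = next (fun p => z (k + p)) k.
Proof.
move=> L_gt0 next_local; exists (fun k => register k 0); split.
- by move=> p ltpL; rewrite -[p]add0n -registerE.
- move=> k; rewrite (_ : k + L = k.+1 + L.-1); last by lia.
  rewrite -registerE; last by lia.
  rewrite /= ltnn; apply: next_local => p ltpL; exact: registerE.
Qed.
End Recurrence.

Section SlidingBlockCode.
Variables (S : Type) (r m : nat) (f : (nat -> S) -> S).
Hypothesis f_local : forall w w', (forall p, p <= r -> w p = w' p) -> f w = f w'.

Definition window (x : config S) (i : Z) : nat -> S :=
  fun p => x (i - Z.of_nat m + Z.of_nat p)%Z.

Definition sliding (x : config S) : config S := fun i => f (window x i).

Lemma sliding_is_CA : is_CA sliding.
Proof.
split=> [x i | x].
- exists (Z.abs_nat i + m + r) => y agree_xy.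
  apply: f_local => p lepr; apply: agree_xy; lia.
- apply: functional_extensionality => i; rewrite /sliding /shift /window.
  congr f; apply: functional_extensionality => p; congr x; lia.
Qed.

Section Bipermutive.
Variables (zero : S) (solveR solveL : (nat -> S) -> S -> S).
Hypothesis r_gt0 : 0 < r.
Hypothesis solveR_spec : forall w b, w r = solveR w b -> f w = b.
Hypothesis solveR_local :
  forall w w' b, (forall p, p < r -> w p = w' p) -> solveR w b = solveR w' b.
Hypothesis solveL_spec : forall w b, w 0 = solveL w b -> f w = b.
Hypothesis solveL_local :
  forall w w' b, (forall p, 0 < p <= r -> w p = w' p) -> solveL w b = solveL w' b.

Lemma right_preimage (y : config S) :
  exists xr : nat -> S, (forall p, p < r -> xr p = zero) /\
    forall k, f (fun p => xr (k + p)) = y (Z.of_nat k + Z.of_nat m)%Z.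
Proof.
have [xr [xr_seed xr_next]] := @recurrence_solution _ zero r
  (fun v k => solveR v (y (Z.of_nat k + Z.of_nat m)%Z)) r_gt0
  (fun w w' k agree => solveR_local _ agree).
by exists xr; split=> // k; apply: solveR_spec; rewrite xr_next.
Qed.

(* Symmetrically, solving for the leftmost entry extends to the left; the
   half-line is read backwards, xl p standing for the cell r - 1 - p. *)
Lemma left_preimage (y : config S) :
  exists xl : nat -> S, (forall p, p < r -> xl p = zero) /\
    forall k, f (fun p => xl (k + r - p)) = y (Z.of_nat m - Z.of_nat k - 1)%Z.
Proof.
have [|xl [xl_seed xl_next]] := @recurrence_solution _ zero r
  (fun v k => solveL (fun p => v (r - p)) (y (Z.of_nat m - Z.of_nat k - 1)%Z)) r_gt0 _.
  by move=> w w' k agree; apply: solveL_local => p lt0pr; apply: agree; lia.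
exists xl; split=> // k; apply: solveL_spec.
rewrite subn0 xl_next; apply: solveL_local => p lt0pr; congr xl; lia.
Qed.

(* Both half-lines start from the same seed on the cells 0..r-1, so they glue
   into a preimage of y: bipermutive sliding block codes are surjective. *)
Lemma sliding_surjective : surjective_map sliding.
Proof.
move=> y; have [xr [xr_seed xr_img]] := right_preimage y.
have [xl [xl_seed xl_img]] := left_preimage y.
exists (fun j => if (0 <=? j)%Z then xr (Z.to_nat j) else xl (Z.to_nat (Z.of_nat r - 1 - j))).
apply: functional_extensionality => i; rewrite /sliding /window.
case: (Z.leb_spec (Z.of_nat m) i) => [lemi | ltim].
- pose k := Z.to_nat (i - Z.of_nat m).
  rewrite -[RHS](_ : y (Z.of_nat k + Z.of_nat m)%Z = y i); last by congr y; lia.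
  rewrite -xr_img; apply: f_local => p _.
  rewrite (_ : (0 <=? _)%Z = true); last by apply/Z.leb_le; lia.
  congr xr; lia.
- pose k := Z.to_nat (Z.of_nat m - i - 1).
  rewrite -[RHS](_ : y (Z.of_nat m - Z.of_nat k - 1)%Z = y i); last by congr y; lia.
  rewrite -xl_img; apply: f_local => p lepr.
  case: (Z.leb_spec 0 (i - Z.of_nat m + Z.of_nat p)) => sign_j.
  + rewrite xr_seed ?xl_seed //; lia.
  + congr xl; lia.
Qed.
End Bipermutive.
End SlidingBlockCode.

Section PermutiveRule.
Variables (S : Type) (G : zmodType) (e : S -> G) (e' : G -> S).
Hypotheses (eK : cancel e e') (e'K : cancel e' e).
Variables (n : nat) (phi : list S -> G).

Definition interior (w : nat -> S) : list S := [seq w p | p <- iota 1 (2 * n - 1)].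

(* Any interior correction phi keeps the rule bipermutive. *)
Definition perm_rule (w : nat -> S) : S :=
  e' (e (w 0) + phi (interior w) + e (w (2 * n)))%R.

Lemma interior_local w w' :
  (forall p, 0 < p < 2 * n -> w p = w' p) -> interior w = interior w'.
Proof.
by move=> agree; apply/eq_in_map => p; rewrite mem_iota => /andP[? ?]; apply: agree; lia.
Qed.

Lemma perm_rule_local w w' :
  (forall p, p <= 2 * n -> w p = w' p) -> perm_rule w = perm_rule w'.
Proof.
move=> agree; rewrite /perm_rule (@interior_local w w'); last by move=> p ?; apply: agree; lia.
by rewrite !agree.
Qed.

Definition solve_right (w : nat -> S) (b : S) : S :=
  e' (- (e (w 0) + phi (interior w)) + e b)%R.

Definition solve_left (w : nat -> S) (b : S) : S :=
  e' (e b - (phi (interior w) + e (w (2 * n))))%R.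

Lemma solve_right_spec w b : w (2 * n) = solve_right w b -> perm_rule w = b.
Proof. by move=> wr; rewrite /perm_rule wr e'K addNKr eK. Qed.

Lemma solve_left_spec w b : w 0 = solve_left w b -> perm_rule w = b.
Proof. by move=> wl; rewrite /perm_rule wl e'K -addrA subrK eK. Qed.

(* For n > 0 the two extremal entries are distinct, so each solver ignores the
   entry it solves for. *)
Lemma solve_right_local w w' b : 0 < n ->
  (forall p, p < 2 * n -> w p = w' p) -> solve_right w b = solve_right w' b.
Proof.
move=> n_gt0 agree; rewrite /solve_right (@interior_local w w'); last first.
  by move=> p ?; apply: agree; lia.
by rewrite agree //; lia.
Qed.

Lemma solve_left_local w w' b : 0 < n ->
  (forall p, 0 < p <= 2 * n -> w p = w' p) -> solve_left w b = solve_left w' b.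
Proof.
move=> n_gt0 agree; rewrite /solve_left (@interior_local w w'); last first.
  by move=> p ?; apply: agree; lia.
by rewrite agree //; lia.
Qed.

Lemma perm_ca_is_CA : is_CA (sliding n perm_rule).
Proof. exact: sliding_is_CA perm_rule_local. Qed.

Lemma perm_ca_surjective : 0 < n -> surjective_map (sliding n perm_rule).
Proof.
move=> n_gt0; apply: (@sliding_surjective _ (2 * n) n perm_rule perm_rule_local (e' 0%R)
  solve_right solve_left); first by lia.
- exact: solve_right_spec.
- by move=> w w' b; apply: solve_right_local.
- exact: solve_left_spec.
- by move=> w w' b; apply: solve_left_local.
Qed.
End PermutiveRule.

Section Interpolation.
Variables (S : eqType) (G : zmodType) (e : S -> G) (e' : G -> S).
Hypothesis eK : cancel e e'.
Variables (c : config S -> config S) (X : list (config S)) (n : nat).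

(* On the interior of a sample x, phi compensates the two extremal entries so
   that the rule outputs c x 0; elsewhere it is 0. *)
Definition interpolant (s : list S) : G :=
  if List.find (fun x => interior n (window n x 0) == s) X is Some x
  then (- e (window n x 0 0) + e (c x 0%Z) - e (window n x 0 (2 * n)))%R
  else 0%R.

Lemma interpolant_agree :
  (forall x x', List.In x X -> List.In x' X ->
     interior n (window n x 0) = interior n (window n x' 0) -> x = x') ->
  forall x, List.In x X -> sliding n (perm_rule e e' n interpolant) x 0%Z = c x 0%Z.
Proof.
move=> sep x inX; rewrite /sliding /perm_rule /interpolant.
case found: List.find => [x'|]; last by move: (List.find_none _ _ found x inX); rewrite eqxx.
have [inX' /eqP same_interior] := List.find_some _ _ found.
by rewrite (sep _ _ inX' inX same_interior) addrA addNKr subrK eK.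
Qed.
End Interpolation.

Definition agree (S : Type) (N : nat) (x y : config S) : Prop :=
  forall j, (Z.abs j <= Z.of_nat N)%Z -> x j = y j.

Lemma agree_mono (S : Type) (N M : nat) (x y : config S) :
  N <= M -> agree M x y -> agree N x y.
Proof. by move=> leNM agreeM j ltjN; apply: agreeM; lia. Qed.

Lemma agree_or_differ (S : Type) (x y : config S) : exists N, agree N x y -> x = y.
Proof.
have [-> | neq] := classic (x = y); first by exists 0.
have [j xj_neq] : exists j, x j <> y j.
  apply: NNPP => same; apply: neq; apply: functional_extensionality => j.
  by apply: NNPP => neqj; apply: same; exists j.
by exists (Z.abs_nat j) => agreeN; case: xj_neq; apply: agreeN; lia.
Qed.

Lemma uniform_bound (A : Type) (Q : A -> nat -> Prop) (L : list A) :
  (forall a N M, N <= M -> Q a N -> Q a M) ->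
  (forall a, List.In a L -> exists N, Q a N) ->
  exists N, forall a, List.In a L -> Q a N.
Proof.
move=> mono; elim: L => [|a L IH] eventually; first by exists 0.
have [Na Qa] := eventually a (or_introl erefl).
have [NL QL] := IH (fun b inL => eventually b (or_intror inL)).
exists (maxn Na NL) => b [<- | inL]; apply: mono.
- exact: leq_maxl.
- exact: Qa.
- exact: leq_maxr.
- exact: QL.
Qed.

Lemma window_separation (S : Type) (X : list (config S)) :
  exists N, forall x y, List.In x X -> List.In y X -> agree N x y -> x = y.
Proof.
have sep_mono x y N M : N <= M -> (agree N x y -> x = y) -> agree M x y -> x = y.
  by move=> leNM sepN /(agree_mono leNM).
have [N sepN] : exists N, forall x, List.In x X -> forall y, List.In y X -> agree N x y -> x = y.
  apply: uniform_bound => [x N M leNM sepN y inX | x _]; first exact: sep_mono leNM (sepN y inX).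
  apply: uniform_bound => [y N M leNM | y _]; [exact: sep_mono leNM | exact: agree_or_differ].
by exists N => x y inX; apply: sepN.
Qed.

Lemma interior_agree (S : Type) (N : nat) (x y : config S) :
  interior N.+1 (window N.+1 x 0) = interior N.+1 (window N.+1 y 0) -> agree N x y.
Proof.
move=> /eq_in_map same j ltjN; have := same (Z.to_nat (j + Z.of_nat N.+1)).
rewrite mem_iota /window (_ : (0 - _ + _)%Z = j); last by lia.
by apply; lia.
Qed.

Lemma zmod_coding (S : finType) : 0 < #|S| ->
  exists (G : zmodType) (e : S -> G) (e' : G -> S), cancel e e' /\ cancel e' e.
Proof.
move=> S_gt0; have cardS : #|S| = #|S|.-1.+1 by rewrite prednK.
exists 'I_#|S|.-1.+1, (fun a => cast_ord cardS (enum_rank a)).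
exists (fun i => enum_val (cast_ord (esym cardS) i)).
by split=> [a | i]; rewrite ?cast_ordK ?enum_rankK ?enum_valK ?cast_ordKV.
Qed.

Theorem proposition3p3 (Sigma : finType) (hSigma : 1 < #|Sigma|)
  (c : config Sigma -> config Sigma) (hc : is_CA c)
  (X : list (config Sigma)) :
  exists d : config Sigma -> config Sigma,
    is_CA d /\ surjective_map d /\
    (forall x, List.In x X -> d x 0%Z = c x 0%Z).
Proof.
have [G [e [e' [eK e'K]]]] := zmod_coding (ltnW hSigma).
have [N separated] := window_separation X.
exists (sliding N.+1 (perm_rule e e' N.+1 (interpolant e c X N.+1))); split; [|split].
- exact: perm_ca_is_CA.
- exact: perm_ca_surjective.
- apply: interpolant_agree => // x y inX inY /interior_agree; exact: separated.
Qed.
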